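(* Let $k\ge 3$, constants $c_1\ge\dots\ge c_k>0$ with $\sum c_i=1$, and for $n$ with all $c_in$ integers let $G_n$ be the complete $k$-partite graph with parts $V_1,\dots,V_k$, $|V_i|=c_in$. Let $w_0$ be a uniformly random initial weighting. If $c_i<\tfrac12$, then $$\mathbb{E}(m_i)\le \frac{2c_i}{1-2c_i}.$$
   Context: An initial weighting of a graph on vertex set $V$, $|V|=n$, is a bijection $w_0:V\to\{-n,\dots,-1\}$; here $w_0$ is uniform among all $n!$ such bijections. The quantity $m_i$ is defined by $$m_i=\max\Big\{x\ge 0:\ \exists\, y\ge 0 \text{ with } 2y+x\le n \text{ and } \Big|\bigcup_{j=1}^{2y+x}w_0^{-1}(-j)\cap V_i\Big|=y+x\Big\},$$ equivalently $m_i=\max_{0\le t\le n}X(t)$ where $X(t)=|\{v\in V_i: w_0(v)\ge -t\}|-|\{v\in V\setminus V_i: w_0(v)\ge -t\}|$. A complete $k$-partite graph with parts $V_1,\dots,V_k$ has an edge between $u$ and $v$ iff they lie in different parts. *)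

From HB Require Import structures.
From mathcomp Require Import all_boot all_order all_algebra all_fingroup.
Set Implicit Arguments. Unset Strict Implicit. Unset Printing Implicit Defensive.
Import Order.TTheory GRing.Theory Num.Theory.

(* Vertex set V = 'I_n.  An initial weighting w0 : V -> {-n,...,-1} (bijection)
   is encoded by a permutation s : {perm 'I_n} via  w0 v = -(s v + 1).
   Hence  w0 v >= -t  <->  s v < t. *)
Definition weight n (s : {perm 'I_n}) (v : 'I_n) : int := - ((s v).+1 : nat)%:Z.

Definition Xwalk n (A : {set 'I_n}) (s : {perm 'I_n}) (t : nat) : int :=
  (#|[set v in A | (weight s v >= - (t%:Z))%R]|%:Z
   - #|[set v in ~: A | (weight s v >= - (t%:Z))%R]|%:Z)%R.

(* m_A = max_{0<=t<=n} X(t).  Since X(0) = 0 this maximum is a natural number;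
   we take the max of the nonnegative parts, which coincides with it. *)
Definition mval n (A : {set 'I_n}) (s : {perm 'I_n}) : nat :=
  \max_(t < n.+1) `|Xwalk A s t|%N * ((0 <= Xwalk A s t)%R : nat).

Definition Em (R : numFieldType) n (A : {set 'I_n}) : R :=
  ((\sum_(s : {perm 'I_n}) (mval A s)%:R) / (n`!)%:R)%R.

Definition kpart_adj n k (part : 'I_n -> 'I_k) : rel 'I_n :=
  fun u v => part u != part v.

Definition Vpart n k (part : 'I_n -> 'I_k) (j : 'I_k) : {set 'I_n} :=
  [set v | part v == j].

From HB Require Import structures.
From mathcomp Require Import all_boot all_order all_algebra all_fingroup.
From mathcomp Require Import zify ring lra.
Import Order.TTheory GRing.Theory Num.Theory.

Set Implicit Arguments. Unset Strict Implicit. Unset Printing Implicit Defensive.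

(** Reading the vertices in decreasing order of weight and recording which of
    them lie in [V_i] turns [X] into a +-1 walk driven by a uniformly random
    0/1 sequence with [a = |V_i|] ones among [n], and [m_i] into the maximum
    of that walk.  By reflection, at most ['C(n, a - m)] such sequences make
    the walk reach height [m], so the expected maximum is at most
    [\sum_(j < a) 'C(n, j) / 'C(n, a)], and comparing consecutive binomial
    coefficients bounds this ratio by [a / (n + 1 - 2 a)]. *)

Fixpoint bool_seqs n : seq (seq bool) :=
  if n is n'.+1 then map (cons true) (bool_seqs n') ++ map (cons false) (bool_seqs n')
  else [:: [::]].

Lemma size_bool_seqs n x : x \in bool_seqs n -> size x = n.
Proof.
elim: n x => [|n IH] x /=; first by rewrite inE => /eqP->.
by rewrite mem_cat => /orP[] /mapP[y /IH Hy ->] /=; rewrite Hy.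
Qed.

Lemma sum_bool_seqs_eq n (G : seq bool -> nat) y : size y = n ->
  \sum_(x <- bool_seqs n) (y == x) * G x = G y.
Proof.
elim: n G y => [|n IH] G [|b y] //= => [_|[Hy]].
  by rewrite big_cons big_nil /= mul1n addn0.
rewrite big_cat !big_map /=; case: b.
  by rewrite (IH (fun x => G (true :: x))) // big1 ?addn0.
by rewrite (IH (fun x => G (false :: x))) // big1.
Qed.

Lemma count_bool_seqs n a : \sum_(x <- bool_seqs n | count id x == a) 1 = 'C(n, a).
Proof.
elim: n a => [|n IH] a; first by rewrite big_cons big_nil; case: a.
rewrite /= big_cat !big_map /=; case: a => [|a].
  by rewrite big1 // add0n bin0; have := IH 0; rewrite bin0.
by rewrite binS -!IH addnC.
Qed.

(* Height reached by the walk stepping +1 on [true] and -1 on [false]; the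
   truncated predecessor makes [max_walk (b :: x)] equal to
   [max 0 (+-1 + max_walk x)]. *)
Fixpoint max_walk (x : seq bool) : nat :=
  if x is b :: x' then (if b then (max_walk x').+1 else (max_walk x').-1) else 0.

Lemma max_walk_le_size x : max_walk x <= size x.
Proof. by elim: x => [|[] x IH] //=; lia. Qed.

Definition nb_reach n a m := \sum_(x <- bool_seqs n | count id x == a) (m <= max_walk x).

Lemma nb_reachS n a m : nb_reach n.+1 a m =
  (if a is a'.+1 then nb_reach n a' m.-1 else 0) +
  (if m is 0 then nb_reach n a 0 else nb_reach n a m.+1).
Proof.
rewrite /nb_reach /= big_cat !big_map /=; congr (_ + _).
  case: a => [|a]; first by rewrite big1.
  by apply: eq_bigr => x _; case: m.
case: m => [|m] //.
by apply: eq_bigr => x _ /=; case: (max_walk x) => [|[|k]].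
Qed.

(* The reflection principle, as an upper bound. *)
Lemma nb_reach_le n a m : nb_reach n a m <= (m <= a) * 'C(n, a - m).
Proof.
elim: n a m => [|n IH] a m.
  by rewrite /nb_reach big_cons big_nil; case: a => [|a] //=; case: m.
rewrite nb_reachS; case: m => [|m]; case: a => [|a] /=.
- by have := IH 0 0; rewrite !bin0; lia.
- by have := IH a.+1 0; have := IH a 0; rewrite !subn0 binS; lia.
- by have := IH 0 m.+2; lia.
have := IH a m; have := IH a.+1 m.+2; rewrite !subSS.
case: (leqP m a) => Hma; last by lia.
have -> : a - m.+1 = (a - m).-1 by lia.
by case E: (a - m) => [|d]; rewrite ?bin0 ?binS /=; lia.
Qed.

Lemma sum_ltn_nat n q : \sum_(0 <= m < n) (m < q) = minn q n.
Proof.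
elim: n => [|n IH]; first by rewrite big_geq ?minn0.
by rewrite big_nat_recr //= IH; lia.
Qed.

Lemma sum_max_walk_le n a : a <= n ->
  \sum_(x <- bool_seqs n | count id x == a) max_walk x <= \sum_(j < a) 'C(n, j).
Proof.
move=> Han.
rewrite big_seq_cond (eq_bigr (fun x => \sum_(0 <= m < n) (m < max_walk x))); last first.
  move=> x /andP[Hx _]; rewrite sum_ltn_nat.
  by have := max_walk_le_size x; rewrite (size_bool_seqs Hx); lia.
rewrite -big_seq_cond exchange_big /=.
apply: (@leq_trans (\sum_(0 <= m < n) (m.+1 <= a) * 'C(n, a - m.+1))).
  by apply: leq_sum => m _; apply: nb_reach_le.
rewrite (big_cat_nat (leq0n a) Han) /= [X in _ + X]big_nat_cond [X in _ + X]big1 ?addn0; last first.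
  by move=> m /andP[/andP[+ _] _]; case: leqP.
rewrite big_mkord (reindex_inj rev_ord_inj) /=.
apply: eq_leq; apply: eq_bigr => j _; have lt_ja := ltn_ord j.
rewrite (_ : a - j.+1 < a) ?mul1n; last by lia.
by congr 'C(n, _); lia.
Qed.

Lemma sum_binomial_lt_le n k : 2 * k <= n ->
  (\sum_(j < k) 'C(n, j)) * (n + 1 - 2 * k) <= k * 'C(n, k).
Proof.
elim: k => [|k IH] Hk; first by rewrite big_ord0.
rewrite big_ord_recr /= mul_bin_left.
have {IH} : (\sum_(j < k) 'C(n, j)) * (n + 1 - 2 * k) <= k * 'C(n, k) by apply: IH; lia.
move: (\sum_(j < k) 'C(n, j)) ('C(n, k)) => p c; nia.
Qed.

(* Entry [j] records whether the vertex of weight [-(j+1)] lies in [A]. *)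
Definition rank_bits n (A : {set 'I_n}) (s : {perm 'I_n}) : seq bool :=
  [seq (s^-1)%g j \in A | j <- enum 'I_n].

Lemma size_rank_bits n (A : {set 'I_n}) s : size (rank_bits A s) = n.
Proof. by rewrite size_map size_enum_ord. Qed.

Lemma nth_rank_bits n (A : {set 'I_n}) s (j : 'I_n) :
  nth false (rank_bits A s) j = ((s^-1)%g j \in A).
Proof. by rewrite (nth_map j) ?size_enum_ord // nth_ord_enum. Qed.

Lemma count_rank_bits n (A : {set 'I_n}) s : count id (rank_bits A s) = #|A|.
Proof.
rewrite count_map -sum1_count big_enum_cond /= sum1_card.
by rewrite -(card_preimset A (@perm_inj _ (s^-1)%g)); apply: eq_card => j; rewrite !inE.
Qed.

Lemma perm_eq_bool_seq (x1 x2 : seq bool) :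
  size x1 = size x2 -> count id x1 = count id x2 -> perm_eq x1 x2.
Proof.
move=> eq_size eq_count; apply/seq.permP => P.
have count_bool (x : seq bool) : count P x = P true * count id x + P false * count negb x.
  elim: x => [|b x IH] /=; first lia.
  by rewrite IH; case: b; case: (P true); case: (P false) => /=; lia.
have count_negb (x : seq bool) : count negb x = size x - count id x.
  by rewrite -(count_predC id x) addKn.
by rewrite !count_bool !count_negb eq_size eq_count.
Qed.

Lemma sum_rank_bits_eq n (A : {set 'I_n}) (x1 x2 : seq bool) :
  size x1 = n -> size x2 = n -> count id x1 = count id x2 ->
  \sum_(s : {perm 'I_n}) (rank_bits A s == x1) = \sum_(s : {perm 'I_n}) (rank_bits A s == x2).
Proof.
move=> size_x1 size_x2 eq_count.
have /eqP size_x1' := size_x1; pose t1 : n.-tuple bool := Tuple size_x1'.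
have /tuple_permP[p x2_def] : perm_eq x2 t1 by apply: perm_eq_bool_seq; rewrite /= ?size_x1.
(* [s |-> s * p^-1] maps the fiber over [x2] onto the fiber over [x1]. *)
rewrite [RHS](reindex_inj (@mulIg _ p^-1)%g); apply: eq_bigr => s _.
have -> : x1 = [seq tnth t1 j | j <- enum 'I_n] by rewrite map_tnth_enum.
have -> : x2 = [seq tnth t1 (p j) | j <- enum 'I_n].
  by rewrite x2_def -[in LHS]map_tnth_enum; apply: eq_map => j; apply: tnth_mktuple.
have -> : rank_bits A (s * p^-1)%g = [seq (s^-1)%g (p j) \in A | j <- enum 'I_n].
  by apply: eq_map => j; rewrite invMg invgK permM.
rewrite /rank_bits; congr nat_of_bool; apply/eqP/eqP => /eq_in_map eq_bits; apply/eq_in_map => j _.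
  exact: eq_bits (p j) (mem_enum _ _).
by have := eq_bits ((p^-1)%g j) (mem_enum _ _); rewrite permKV.
Qed.

Lemma sum_perm_rank_bits n (A : {set 'I_n}) (G : seq bool -> nat) :
  \sum_(s : {perm 'I_n}) G (rank_bits A s) =
  (\sum_(s : {perm 'I_n}) (rank_bits A s == rank_bits A 1%g)) *
  \sum_(x <- bool_seqs n | count id x == #|A|) G x.
Proof.
rewrite (eq_bigr (fun s => \sum_(x <- bool_seqs n) (rank_bits A s == x) * G x)); last first.
  by move=> s _; rewrite sum_bool_seqs_eq // size_rank_bits.
rewrite exchange_big /= big_distrr /= [RHS]big_mkcond /=.
apply: eq_big_seq => x x_seq; rewrite -big_distrl /=.
case: ifP => [/eqP count_x | count_x].
  rewrite (@sum_rank_bits_eq n A x (rank_bits A 1%g)) ?size_rank_bits ?(size_bool_seqs x_seq) //.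
  by rewrite count_rank_bits.
rewrite big1 ?mul0n // => s _.
suff /negbTE -> : rank_bits A s != x by [].
by apply/eqP => eq_x; move: count_x; rewrite -eq_x count_rank_bits eqxx.
Qed.

Local Open Scope ring_scope.

Definition walk (x : seq bool) (t : nat) : int :=
  \sum_(0 <= j < t) (if nth false x j then 1 else -1).

Lemma walk0 x : walk x 0 = 0.
Proof. by rewrite /walk big_geq. Qed.

Lemma walkS b x t : walk (b :: x) t.+1 = (if b then 1 else -1) + walk x t.
Proof. by rewrite /walk big_nat_recl. Qed.

Lemma walk_le_max_walk x t : (t <= size x)%N -> walk x t <= (max_walk x)%:Z.
Proof.
elim: x t => [|b x IH] [|t] //= Ht; rewrite ?walk0 // walkS.
by have := IH t Ht; case: b => /=; case: (max_walk x) => [|k] /=; lia.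
Qed.

Lemma max_walk_attained x : exists2 t, (t <= size x)%N & walk x t = (max_walk x)%:Z.
Proof.
elim: x => [|b x [t Ht IH]]; first by exists 0%N; rewrite ?walk0.
case: b => /=; first by exists t.+1 => //; rewrite walkS IH; lia.
case E: (max_walk x) => [|k]; first by exists 0%N; rewrite ?walk0.
by exists t.+1 => //; rewrite walkS IH E /=; lia.
Qed.

Lemma Xwalk_rank_bits n (A : {set 'I_n}) s t :
  (t <= n)%N -> Xwalk A s t = walk (rank_bits A s) t.
Proof.
move=> le_tn.
pose step (j : 'I_n) : int := if (j < t)%N then (if (s^-1)%g j \in A then 1 else -1) else 0.
have -> : Xwalk A s t = \sum_v step (s v).
  rewrite /Xwalk -!sum1_card -!natz !natr_sum big_mkcond [X in _ - X]big_mkcond -sumrB.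
  apply: eq_bigr => v _.
  rewrite /step (permK s v) !inE natz /weight lerN2 lez_nat.
  by case: (s v < t)%N; case: (v \in A).
rewrite -(reindex_inj (@perm_inj _ s) (P := xpredT) (F := step)) /walk.
rewrite (big_nat_widen _ _ _ _ _ le_tn) big_mkord [RHS]big_mkcond.
by apply: eq_bigr => j _; rewrite /step nth_rank_bits.
Qed.

Lemma mval_rank_bits n (A : {set 'I_n}) s : mval A s = max_walk (rank_bits A s).
Proof.
apply/eqP; rewrite eqn_leq; apply/andP; split.
  apply/bigmax_leqP => t _; have le_tn : (t <= n)%N by rewrite -ltnS.
  have := @walk_le_max_walk (rank_bits A s) t.
  rewrite size_rank_bits -Xwalk_rank_bits // => /(_ le_tn).
  by case: (Xwalk A s t) => m //=; rewrite ?muln1 ?muln0 // lez_nat.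
have [t le_tn walk_t] := max_walk_attained (rank_bits A s).
rewrite size_rank_bits in le_tn.
apply: leq_trans (leq_bigmax (Ordinal (le_tn : (t < n.+1)%N))).
by rewrite /= Xwalk_rank_bits // walk_t /= muln1.
Qed.

Lemma Em_ge0 (R : numFieldType) n (A : {set 'I_n}) : 0 <= Em R A.
Proof. by rewrite /Em divr_ge0 // sumr_ge0. Qed.

Lemma Em_mul_le (R : realFieldType) n (A : {set 'I_n}) :
  (2 * #|A| <= n)%N -> Em R A * (n.+1 - 2 * #|A|)%N%:R <= #|A|%:R.
Proof.
move=> le_2a_n; set a := #|A|.
set N := (\sum_(s : {perm 'I_n}) (rank_bits A s == rank_bits A 1%g))%N.
set T := (\sum_(x <- bool_seqs n | count id x == a) max_walk x)%N.
have sum_mval : (\sum_(s : {perm 'I_n}) mval A s = N * T)%N.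
  by rewrite (eq_bigr _ (fun s _ => mval_rank_bits A s)) sum_perm_rank_bits.
have fact_n : n`! = (N * 'C(n, a))%N.
  by rewrite -card_Sn -sum1_card (sum_perm_rank_bits A (fun _ => 1%N)) count_bool_seqs.
have N_gt0 : (0 < N)%N by move: (fact_gt0 n); rewrite fact_n muln_gt0 => /andP[].
have C_gt0 : (0 < 'C(n, a))%N by rewrite bin_gt0 (leq_trans _ le_2a_n) ?leq_pmull.
have T_le : (T * (n.+1 - 2 * a) <= a * 'C(n, a))%N.
  apply: leq_trans (sum_binomial_lt_le le_2a_n); rewrite addn1 leq_mul2r.
  by rewrite sum_max_walk_le ?orbT // (leq_trans _ le_2a_n) ?leq_pmull.
rewrite /Em -natr_sum sum_mval fact_n !natrM -mulf_div divff ?pnatr_eq0 -?lt0n // mul1r.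
by rewrite mulrAC ler_pdivrMr ?ltr0n // -!natrM ler_nat.
Qed.

Theorem lemma2 (R : realFieldType) (k : nat) (c : 'I_k -> R) (n : nat)
    (part : 'I_n -> 'I_k) (i : 'I_k) :
  (3 <= k)%N ->
  (forall j1 j2 : 'I_k, (j1 <= j2)%N -> c j2 <= c j1) ->
  (forall j, 0 < c j) ->
  \sum_(j < k) c j = 1 ->
  (forall j, (#|Vpart part j|)%:R = c j * n%:R) ->
  c i < 1 / 2 ->
  Em R (Vpart part i) <= 2 * c i / (1 - 2 * c i).
Proof.
move=> _ _ c_gt0 _ card_part c_lt_half.
have := card_part i; set A := Vpart part i => card_A.
have c_pos := c_gt0 i; have n_ge0 : 0 <= n%:R :> R by [].
have le_2a_n : (2 * #|A| <= n)%N by rewrite -(ler_nat R) natrM card_A; nra.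
have := Em_mul_le R le_2a_n; rewrite natrB ?(leqW le_2a_n) // natrM card_A => Em_le.
have := Em_ge0 R A; move: (Em R A) Em_le => E Em_le E_ge0.
rewrite -addn1 natrD in Em_le; rewrite ler_pdivlMr; last by lra.
(* [E (n + 1 - 2 c n) <= c n] gives [E (1 - 2 c) <= c] if [n > 0], and [E = 0] if [n = 0]. *)
nra.
Qed.
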